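(* Let $A\in\mathbb{C}^{n\times n}_r$ be represented by its Hartwig-Spindelb\''{o}ck decomposition $A=U\left(\begin{array}{cc}\Sigma K & \Sigma L\\ 0 & 0\end{array}\right)U^*$, where $U\in\mathbb{C}^{n\times n}$ is unitary, $\Sigma={\rm diag}(\sigma_1,\dots,\sigma_r)$ is the diagonal matrix of the (positive) singular values of $A$, and $K\in\mathbb{C}^{r\times r}$, $L\in\mathbb{C}^{r\times(n-r)}$ satisfy $KK^*+LL^*=I_r$. Write $\left(\begin{array}{cc}G_1 & G_2\\ G_3 & G_4\end{array}\right)=U^*GU$ with $G_1\in\mathbb{C}^{r\times r}$, $G_2\in\mathbb{C}^{r\times(n-r)}$, $G_3\in\mathbb{C}^{(n-r)\times r}$, $G_4\in\mathbb{C}^{(n-r)\times(n-r)}$, and let $\Delta=\left(\begin{array}{cc}K & L\end{array}\right)U^*GU\left(\begin{array}{c}K^*\\ L^*\end{array}\right)$. Then: \begin{enumerate}[$(1)$] \item ${\rm rank}(A)={\rm rank}(AA^{\sim})$ if and only if $\Delta$ is nonsingular. \item ${\rm rank}(A)={\rm rank}(A^{\sim}A)$ if and only if $G_1$ is nonsingular. \item If $\Delta$ and $G_1$ are nonsingular, then \begin{align*} A^{\mathfrak{m}}&=GU\left(\begin{array}{cc}K^*(G_1\Sigma\Delta)^{-1} & 0\\ L^*(G_1\Sigma\Delta)^{-1} & 0\end{array}\right)U^*G\\ &=U\left(\begin{array}{cc}(G_1K^*+G_2L^* )(\Sigma\Delta)^{-1} & (G_1K^*+G_2L^* )(G_1\Sigma\Delta)^{-1}G_2\\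 (G_3K^*+G_4L^* )(\Sigma\Delta)^{-1} & (G_3K^*+G_4L^* )(G_1\Sigma\Delta)^{-1}G_2\end{array}\right)U^*. \end{align*} \end{enumerate}
   Context: $G=\left(\begin{array}{cc}1&0\\0&-I_{n-1}\end{array}\right)$ is the Minkowski metric matrix of order $n$; the Minkowski adjoint of $A\in\mathbb{C}^{m\times n}$ is $A^{\sim}=GA^*F$ with $G,F$ the Minkowski metric matrices of orders $n$ and $m$. The Minkowski inverse $A^{\mathfrak{m}}$ of $A$ is the unique $X$ (when it exists) with $AXA=A$, $XAX=X$, $(AX)^{\sim}=AX$, $(XA)^{\sim}=XA$. *)

From HB Require Import structures.
From mathcomp Require Import all_boot all_order all_algebra.
Set Implicit Arguments. Unset Strict Implicit. Unset Printing Implicit Defensive.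
Import Order.TTheory GRing.Theory Num.Theory.
Local Open Scope ring_scope.

(* Complex scalars: an arbitrary numClosedFieldType C (e.g. the complex
   numbers), with complex conjugation Num.conj. *)

Definition ctmx (C : numClosedFieldType) (m n : nat) (A : 'M[C]_(m, n))
  : 'M[C]_(n, m) := (map_mx Num.conj A)^T.

Definition minkG (C : numClosedFieldType) (n : nat) : 'M[C]_n :=
  \matrix_(i < n, j < n)
     (if i == j then (if nat_of_ord i == 0%N then 1 else -1) else 0).

Definition madj (C : numClosedFieldType) (m n : nat) (A : 'M[C]_(m, n))
  : 'M[C]_(n, m) := minkG C n *m ctmx A *m minkG C m.

Definition is_mink_inverse (C : numClosedFieldType) (m n : nat)
  (A : 'M[C]_(m, n)) (X : 'M[C]_(n, m)) : Prop :=
  [/\ A *m X *m A = A, X *m A *m X = X,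
      madj (A *m X) = A *m X & madj (X *m A) = X *m A].

From HB Require Import structures.
From mathcomp Require Import all_boot all_order all_algebra.
Set Implicit Arguments. Unset Strict Implicit. Unset Printing Implicit Defensive.
Import Order.TTheory GRing.Theory Num.Theory.
Local Open Scope ring_scope.

(* Write A = P Sigma Q with P := U [I; 0] (orthonormal columns) and
   Q := [K L] U^* (orthonormal rows), so that G1 = P^* G P and Delta = Q G Q^*.
   Then A A~ = P Sigma Delta Sigma^* P^* G and A~ A = G Q^* Sigma^* G1 Sigma Q,
   whose outer factors are one-sided invertible, so these products have the
   ranks of Delta and G1.  When both are invertible, X = G Q^* (G1 Sigma Delta)^-1 P^* G
   satisfies A X = P G1^-1 P^* G and X A = G Q^* Delta^-1 Q, which are
   G-selfadjoint because G1 and Delta are Hermitian; the Penrose equations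
   follow, and uniqueness is the usual Penrose argument. *)

Lemma invmxM (R : comUnitRingType) n (A B : 'M[R]_n) :
  A \in unitmx -> B \in unitmx -> invmx (A *m B) = invmx B *m invmx A.
Proof.
move=> uA uB; have uAB : A *m B \in unitmx by rewrite unitmx_mul uA uB.
by rewrite -[RHS]mul1mx -(mulVmx uAB) -!mulmxA (mulmxA B) mulmxV // mul1mx mulmxV // mulmx1.
Qed.

Lemma unitmx_diag (F : fieldType) n (d : 'rV[F]_n) :
  (forall i, d 0 i != 0) -> diag_mx d \in unitmx.
Proof. by move=> d_neq0; rewrite unitmxE det_diag unitfE; apply/prodf_neq0 => i _. Qed.

Lemma unitmx_mxrank (F : fieldType) n (M : 'M[F]_n) : (M \in unitmx) = (\rank M == n).
Proof. by rewrite -row_free_unit. Qed.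

Lemma mxrank_mulmx_linv (F : fieldType) m n p (P : 'M[F]_(m, n)) (P' : 'M[F]_(n, m))
  (M : 'M[F]_(n, p)) : P' *m P = 1%:M -> \rank (P *m M) = \rank M.
Proof.
move=> P'P; rewrite -mxrank_tr trmx_mul mxrankMfree ?mxrank_tr //.
by apply/row_freeP; exists P'^T; rewrite -trmx_mul P'P trmx1.
Qed.

Lemma mxrank_mulmx_rinv (F : fieldType) m n p (N : 'M[F]_(n, p)) (N' : 'M[F]_(p, n))
  (M : 'M[F]_(m, n)) : N *m N' = 1%:M -> \rank (M *m N) = \rank M.
Proof. by move=> NN'; apply/mxrankMfree/row_freeP; exists N'. Qed.

Section MinkowskiAdjoint.
Variable C : numClosedFieldType.

Lemma ctmxM m n p (A : 'M[C]_(m, n)) (B : 'M[C]_(n, p)) :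
  ctmx (A *m B) = ctmx B *m ctmx A.
Proof. by rewrite /ctmx map_mxM trmx_mul. Qed.

Lemma ctmxK m n (A : 'M[C]_(m, n)) : ctmx (ctmx A) = A.
Proof. by apply/matrixP=> i j; rewrite !mxE conjCK. Qed.

Lemma ctmx1 n : ctmx (1%:M : 'M[C]_n) = 1%:M.
Proof. by rewrite /ctmx map_mx1 trmx1. Qed.

Lemma ctmx0 m n : ctmx (0 : 'M[C]_(m, n)) = 0.
Proof. by rewrite /ctmx map_mx0 trmx0. Qed.

Lemma ctmx_row m n1 n2 (A : 'M[C]_(m, n1)) (B : 'M[C]_(m, n2)) :
  ctmx (row_mx A B) = col_mx (ctmx A) (ctmx B).
Proof. by rewrite /ctmx map_row_mx tr_row_mx. Qed.

Lemma ctmx_col m1 m2 n (A : 'M[C]_(m1, n)) (B : 'M[C]_(m2, n)) :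
  ctmx (col_mx A B) = row_mx (ctmx A) (ctmx B).
Proof. by rewrite /ctmx map_col_mx tr_col_mx. Qed.

Lemma ctmx_invmx n (A : 'M[C]_n) : ctmx (invmx A) = invmx (ctmx A).
Proof. by rewrite /ctmx map_invmx trmx_inv. Qed.

Lemma ctmx_minkG n : ctmx (minkG C n) = minkG C n.
Proof.
apply/matrixP=> i j; rewrite !mxE eq_sym.
case: eqP => [->|_]; last by rewrite rmorph0.
by case: ifP => _; rewrite ?rmorphN rmorph1.
Qed.

Lemma minkG_invol n : minkG C n *m minkG C n = 1%:M.
Proof.
apply/matrixP=> i j; rewrite !mxE (bigD1 i) //= big1 => [|k ki]; last first.
  by rewrite !mxE eq_sym (negPf ki) mul0r.
rewrite !mxE eqxx addr0; have [_|_] := eqVneq i j; last by rewrite mulr0.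
by case: ifP => _; rewrite ?mulrNN mulr1.
Qed.

Lemma madjM m n p (A : 'M[C]_(m, n)) (B : 'M[C]_(n, p)) :
  madj (A *m B) = madj B *m madj A.
Proof. by rewrite /madj ctmxM -!mulmxA (mulmxA (minkG C n)) minkG_invol mul1mx. Qed.

Lemma madj_mulmx_minkG n (M : 'M[C]_n) : madj (M *m minkG C n) = ctmx M *m minkG C n.
Proof. by rewrite /madj ctmxM ctmx_minkG !mulmxA minkG_invol mul1mx. Qed.

Lemma madj_minkG_mulmx n (M : 'M[C]_n) : madj (minkG C n *m M) = minkG C n *m ctmx M.
Proof. by rewrite /madj ctmxM ctmx_minkG -!mulmxA minkG_invol mulmx1. Qed.

Lemma is_mink_inverse_unique m n (A : 'M[C]_(m, n)) X Y :
  is_mink_inverse A X -> is_mink_inverse A Y -> X = Y.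
Proof.
case=> AXA XAX AXsa XAsa [AYA YAY AYsa YAsa].
have XAY_X : X = X *m A *m Y.
  have madjA : madj A = madj A *m (A *m Y) by rewrite -AYsa -madjM AYA.
  rewrite -{1}XAX -mulmxA -AXsa madjM madjA (mulmxA (madj X)) -madjM AXsa.
  by rewrite !mulmxA XAX.
have XAY_Y : Y = X *m A *m Y.
  have madjA : madj A = X *m A *m madj A by rewrite -XAsa -madjM mulmxA AXA.
  rewrite -{1}YAY -YAsa madjM madjA -(mulmxA _ (madj A)) -madjM YAsa.
  by rewrite -!mulmxA (mulmxA Y) YAY.
by rewrite XAY_X -XAY_Y.
Qed.

End MinkowskiAdjoint.

Section FullRankFactorization.
Variables (C : numClosedFieldType) (m n r : nat).
Variables (P : 'M[C]_(m, r)) (S : 'M[C]_r) (Q : 'M[C]_(r, n)) (G1 D : 'M[C]_r).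
Hypotheses (P_orthonormal : ctmx P *m P = 1%:M) (Q_orthonormal : Q *m ctmx Q = 1%:M).
Hypothesis S_unit : S \in unitmx.
Hypotheses (G1_def : ctmx P *m minkG C m *m P = G1)
           (D_def : Q *m minkG C n *m ctmx Q = D).

Local Notation A := (P *m S *m Q).

Let PGP k (M : 'M[C]_(r, k)) : ctmx P *m (minkG C m *m (P *m M)) = G1 *m M.
Proof. by rewrite !mulmxA G1_def. Qed.

Let QGQ k (M : 'M[C]_(r, k)) : Q *m (minkG C n *m (ctmx Q *m M)) = D *m M.
Proof. by rewrite !mulmxA D_def. Qed.

Lemma ctmx_G1 : ctmx G1 = G1.
Proof. by rewrite -G1_def !ctmxM ctmxK ctmx_minkG mulmxA. Qed.

Lemma ctmx_D : ctmx D = D.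
Proof. by rewrite -D_def !ctmxM ctmxK ctmx_minkG mulmxA. Qed.

Lemma madj_factor :
  madj A = minkG C n *m ctmx Q *m ctmx S *m ctmx P *m minkG C m.
Proof. by rewrite /madj !ctmxM !mulmxA. Qed.

Lemma mxrank_mul_madj_factor : \rank (A *m madj A) = \rank D.
Proof.
have PG_rinv : ctmx P *m minkG C m *m (minkG C m *m P) = 1%:M.
  by rewrite -mulmxA (mulmxA (minkG C m)) minkG_invol mul1mx.
have ctS_rinv : ctmx S *m ctmx (invmx S) = 1%:M by rewrite -ctmxM mulVmx ?ctmx1.
have -> : A *m madj A = P *m (S *m D) *m ctmx S *m (ctmx P *m minkG C m).
  by rewrite madj_factor -!mulmxA QGQ.
rewrite (mxrank_mulmx_rinv _ PG_rinv) (mxrank_mulmx_rinv _ ctS_rinv).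
by rewrite (mxrank_mulmx_linv _ P_orthonormal) (mxrank_mulmx_linv _ (mulVmx S_unit)).
Qed.

Lemma mxrank_madj_mul_factor : \rank (madj A *m A) = \rank G1.
Proof.
have GQ_linv : Q *m minkG C n *m (minkG C n *m ctmx Q) = 1%:M.
  by rewrite -mulmxA (mulmxA (minkG C n)) minkG_invol mul1mx.
have ctS_linv : ctmx (invmx S) *m ctmx S = 1%:M by rewrite -ctmxM mulmxV ?ctmx1.
have -> : madj A *m A = minkG C n *m ctmx Q *m (ctmx S *m (G1 *m S *m Q)).
  by rewrite madj_factor -!mulmxA PGP.
rewrite (mxrank_mulmx_linv _ GQ_linv) (mxrank_mulmx_linv _ ctS_linv).
by rewrite (mxrank_mulmx_rinv _ Q_orthonormal) (mxrank_mulmx_rinv _ (mulmxV S_unit)).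
Qed.

Section MinkowskiInverse.
Hypotheses (G1_unit : G1 \in unitmx) (D_unit : D \in unitmx).

Local Notation X :=
  (minkG C n *m ctmx Q *m invmx (G1 *m S *m D) *m ctmx P *m minkG C m).

Let invmx_G1SD : invmx (G1 *m S *m D) = invmx D *m invmx S *m invmx G1.
Proof. by rewrite invmxM ?invmxM ?mulmxA // unitmx_mul G1_unit. Qed.

Lemma mulmx_factor_minv : A *m X = P *m invmx G1 *m ctmx P *m minkG C m.
Proof. by rewrite invmx_G1SD -!mulmxA QGQ !mulKVmx. Qed.

Lemma mulmx_minv_factor : X *m A = minkG C n *m ctmx Q *m invmx D *m Q.
Proof. by rewrite invmx_G1SD -!mulmxA PGP !mulKmx. Qed.

Lemma is_mink_inverse_factor : is_mink_inverse A X.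
Proof.
split.
- by rewrite mulmx_factor_minv -!mulmxA PGP mulKmx.
- by rewrite -mulmxA mulmx_factor_minv invmx_G1SD -!mulmxA PGP mulKmx.
- by rewrite mulmx_factor_minv madj_mulmx_minkG !ctmxM ctmxK ctmx_invmx ctmx_G1 mulmxA.
- rewrite mulmx_minv_factor -!mulmxA madj_minkG_mulmx.
  by rewrite !ctmxM ctmxK ctmx_invmx ctmx_D !mulmxA.
Qed.

End MinkowskiInverse.

End FullRankFactorization.

Section HartwigSpindelbock.
Variables (C : numClosedFieldType) (r m : nat).
Variables (U : 'M[C]_(r + m)) (K : 'M[C]_r) (L : 'M[C]_(r, m)).
Hypotheses (U_unitary : U *m ctmx U = 1%:M)
           (KL_orthonormal : K *m ctmx K + L *m ctmx L = 1%:M).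

Local Notation G := (minkG C (r + m)).
Local Notation P := (U *m col_mx 1%:M (0 : 'M[C]_(m, r))).
Local Notation Q := (row_mx K L *m ctmx U).

Let UtUK k (B : 'M[C]_(r + m, k)) : ctmx U *m (U *m B) = B.
Proof. by rewrite mulmxA (mulmx1C U_unitary) mul1mx. Qed.

Lemma ctmx_hsP : ctmx P = row_mx 1%:M 0 *m ctmx U.
Proof. by rewrite ctmxM ctmx_col ctmx1 ctmx0. Qed.

Lemma ctmx_hsQ : ctmx Q = U *m col_mx (ctmx K) (ctmx L).
Proof. by rewrite ctmxM ctmxK ctmx_row. Qed.

Lemma hsP_orthonormal : ctmx P *m P = 1%:M.
Proof. by rewrite ctmx_hsP -mulmxA UtUK mul_row_col mulmx1 mul0mx addr0. Qed.

Lemma hsQ_orthonormal : Q *m ctmx Q = 1%:M.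
Proof. by rewrite ctmx_hsQ -mulmxA UtUK mul_row_col. Qed.

Lemma hs_factorization (S : 'M[C]_r) :
  U *m block_mx (S *m K) (S *m L) 0 0 *m ctmx U = P *m S *m Q.
Proof.
rewrite !mulmxA; congr (_ *m _); rewrite -!mulmxA; congr (_ *m _).
by rewrite mulmxA mul_col_mx mul_col_row mul1mx !mul0mx.
Qed.

Section MinkowskiBlocks.
Variables (G1 : 'M[C]_r) (G2 : 'M[C]_(r, m)) (G3 : 'M[C]_(m, r)) (G4 : 'M[C]_m).
Hypothesis G_blocks : ctmx U *m G *m U = block_mx G1 G2 G3 G4.

Lemma hsP_gram : ctmx P *m G *m P = G1.
Proof.
rewrite ctmx_hsP -!mulmxA (mulmxA (ctmx U)) (mulmxA (_ *m _)) G_blocks.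
by rewrite mul_block_col mul_row_col !mulmx1 !mulmx0 !addr0 mul1mx mul0mx addr0.
Qed.

Lemma hs_mink_inverse_block (W V : 'M[C]_r) : W *m G1 = V ->
  G *m ctmx Q *m W *m ctmx P *m G =
  U *m block_mx ((G1 *m ctmx K + G2 *m ctmx L) *m V)
                ((G1 *m ctmx K + G2 *m ctmx L) *m W *m G2)
                ((G3 *m ctmx K + G4 *m ctmx L) *m V)
                ((G3 *m ctmx K + G4 *m ctmx L) *m W *m G2) *m ctmx U.
Proof.
move=> WG1; have G_conj : G = U *m block_mx G1 G2 G3 G4 *m ctmx U.
  by rewrite -G_blocks !mulmxA U_unitary mul1mx -mulmxA U_unitary mulmx1.
rewrite ctmx_hsP ctmx_hsQ G_conj -!mulmxA !UtUK.
rewrite (mulmxA (block_mx _ _ _ _)) (mulmxA (row_mx _ _)).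
rewrite mul_block_col mul_row_block !mul1mx !mul0mx !addr0.
by rewrite (mulmxA W) mul_mx_row WG1 (mulmxA (col_mx _ _)) mul_col_row.
Qed.

End MinkowskiBlocks.

Lemma hs_mink_inverse_factor (W : 'M[C]_r) :
  G *m U *m block_mx (ctmx K *m W) (0 : 'M_(r, m)) (ctmx L *m W) (0 : 'M_m)
    *m ctmx U *m G = G *m ctmx Q *m W *m ctmx P *m G.
Proof.
have -> : block_mx (ctmx K *m W) 0 (ctmx L *m W) 0 =
          col_mx (ctmx K) (ctmx L) *m W *m row_mx 1%:M (0 : 'M_(r, m)).
  by rewrite mul_col_mx mul_col_row !mulmx1 !mulmx0.
by rewrite ctmx_hsP ctmx_hsQ !mulmxA.
Qed.

End HartwigSpindelbock.

Theorem theorem7p1 (C : numClosedFieldType) (r m : nat)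
  (A U : 'M[C]_(r + m)) (s : 'rV[C]_r)
  (K : 'M[C]_r) (L : 'M[C]_(r, m))
  (G1 : 'M[C]_r) (G2 : 'M[C]_(r, m)) (G3 : 'M[C]_(m, r)) (G4 : 'M[C]_m) :
  \rank A = r ->
  U *m ctmx U = 1%:M ->
  (forall i, 0 < s 0 i) ->
  K *m ctmx K + L *m ctmx L = 1%:M ->
  A = U *m block_mx (diag_mx s *m K) (diag_mx s *m L) 0 0 *m ctmx U ->
  ctmx U *m minkG C (r + m) *m U = block_mx G1 G2 G3 G4 ->
  let Sigma := diag_mx s in
  let Delta := row_mx K L *m (ctmx U *m minkG C (r + m) *m U)
                 *m col_mx (ctmx K) (ctmx L) in
  [/\ (\rank A = \rank (A *m madj A) <-> Delta \in unitmx),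
      (\rank A = \rank (madj A *m A) <-> G1 \in unitmx) &
      (Delta \in unitmx -> G1 \in unitmx ->
       let X1 := minkG C (r + m) *m U
            *m block_mx (ctmx K *m invmx (G1 *m Sigma *m Delta)) (0 : 'M_(r, m))
                        (ctmx L *m invmx (G1 *m Sigma *m Delta)) (0 : 'M_(m, m))
            *m ctmx U *m minkG C (r + m) in
       let X2 := U
            *m block_mx
                 ((G1 *m ctmx K + G2 *m ctmx L) *m invmx (Sigma *m Delta))
                 ((G1 *m ctmx K + G2 *m ctmx L) *m invmx (G1 *m Sigma *m Delta) *m G2)
                 ((G3 *m ctmx K + G4 *m ctmx L) *m invmx (Sigma *m Delta))
                 ((G3 *m ctmx K + G4 *m ctmx L) *m invmx (G1 *m Sigma *m Delta) *m G2)
            *m ctmx U in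
       (forall X, is_mink_inverse A X <-> X = X1) /\ X1 = X2)].
Proof.
move=> rkA U_unitary s_pos KL_orthonormal A_def G_blocks Sigma Delta.
have Sigma_unit : Sigma \in unitmx by apply: unitmx_diag => i; rewrite gt_eqF.
have G1_def := hsP_gram G_blocks.
have Delta_def : row_mx K L *m ctmx U *m minkG C (r + m)
                   *m ctmx (row_mx K L *m ctmx U) = Delta.
  by rewrite ctmx_hsQ /Delta !mulmxA.
have P_orth := hsP_orthonormal U_unitary.
have Q_orth := hsQ_orthonormal U_unitary KL_orthonormal.
rewrite rkA A_def hs_factorization -/Sigma; split.
- rewrite (mxrank_mul_madj_factor P_orth Sigma_unit Delta_def) unitmx_mxrank eq_sym.
  exact: rwP eqP.
- rewrite (mxrank_madj_mul_factor Q_orth Sigma_unit G1_def) unitmx_mxrank eq_sym.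
  exact: rwP eqP.
move=> Delta_unit G1_unit X1 X2; rewrite /X1 /X2 hs_mink_inverse_factor; split.
  move=> X; split=> [X_minv|->]; last exact: is_mink_inverse_factor.
  exact/(is_mink_inverse_unique X_minv)/is_mink_inverse_factor.
apply: hs_mink_inverse_block => //.
by rewrite -mulmxA invmxM ?mulmxKV // unitmx_mul Sigma_unit.
Qed.
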